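(* For every real $u<1$ with $u\neq0$, $$\sum_{k=0}^\infty\frac{u^k}{2k+1}\left(\left(1-i\sqrt{1-u}\right)^{-2k-1}+\left(1+i\sqrt{1-u}\right)^{-2k-1}\right)=\frac{\operatorname{arctanh}\sqrt u}{\sqrt u}.$$
   Context: Here $i=\sqrt{-1}$ and $\sqrt{1-u}>0$. The right-hand side is the even function $\frac{\operatorname{arctanh}\sqrt u}{\sqrt u}=\sum_{k\ge0}\frac{u^k}{2k+1}$; for $0<u<1$ it is the real value with $\sqrt u>0$, and for $u<0$ it equals $\frac{\arctan\sqrt{|u|}}{\sqrt{|u|}}$. *)

From Stdlib Require Import Reals.
From Coquelicot Require Import Coquelicot.
Open Scope R_scope.

Definition arctanh (x : R) : R := / 2 * ln ((1 + x) / (1 - x)).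

(* The right-hand side  arctanh(sqrt u)/sqrt u  as specified in the paper:
   for 0 < u < 1 the real value with sqrt u > 0; for u < 0 it equals
   arctan(sqrt|u|)/sqrt|u|. (u = 0 is excluded in the theorem.) *)
Definition rhs (u : R) : R :=
  if Rlt_dec 0 u then arctanh (sqrt u) / sqrt u
  else atan (sqrt (- u)) / sqrt (- u).

Definition term (u : R) (k : nat) : C :=
  let s := sqrt (1 - u) in
  (RtoC (u ^ k / INR (2 * k + 1)) *
   (Cinv (Cpow (RtoC 1 - Ci * RtoC s) (2 * k + 1))
    + Cinv (Cpow (RtoC 1 + Ci * RtoC s) (2 * k + 1))))%C.

(** The two summands of [term u k] are complex conjugate: with
    [w = 1 / (1 - i sqrt (1 - u))] the [k]-th term is the real number
    [c_k = u^k / (2k+1) * 2 Re (w^(2k+1))], and [|w|^2 = 1 / (2 - u)].  Hence the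
    odd power series [F x = sum_k c_k x^(2k+1)] converges for [x^2 < (2 - u) / |u|],
    a range containing [[0, 1]], and differentiating termwise turns it into the
    geometric series [F' x = 2 Re (w / (1 - u x^2 w^2))], a rational function of [x].
    That function has an elementary primitive (a difference of logarithms for
    [u > 0], an arctangent for [u < 0]) which vanishes at [0] and equals the
    right-hand side at [1]; since [F 0 = 0], the sum [F 1] of the series is the
    right-hand side. *)

From Stdlib Require Import Reals Lra.
From Coquelicot Require Import Coquelicot.
Open Scope R_scope.

Lemma is_series_additive {K1 K2 : AbsRing} {U : NormedModule K1} {V : NormedModule K2}
  (f : U -> V) (a : nat -> U) (l : U) :
  (forall x y, f (plus x y) = plus (f x) (f y)) ->
  filterlim f (locally l) (locally (f l)) ->
  is_series a l -> is_series (fun n => f (a n)) (f l).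
Proof.
  intros f_plus f_cont a_l.
  assert (sum_f : forall n, f (sum_n a n) = sum_n (fun k => f (a k)) n).
  { induction n as [|n IH]; [now rewrite !sum_O | now rewrite !sum_Sn, f_plus, IH]. }
  apply (filterlim_ext _ _ sum_f). exact (filterlim_comp _ _ _ _ _ _ _ _ a_l f_cont).
Qed.

Lemma filterlim_Re (z : C) : filterlim Re (locally z) (locally (Re z)).
Proof.
  apply filterlim_locally. intros eps. exists eps. now intros w [H _].
Qed.

Lemma filterlim_RtoC (x : R) : filterlim RtoC (locally x) (locally (RtoC x)).
Proof.
  apply filterlim_locally. intros eps. exists eps. intros y H. split; [exact H | apply ball_center].
Qed.

Lemma is_series_C_geom (z : C) : Cmod z < 1 -> is_series (fun n => Cpow z n) (/ (1 - z))%C.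
Proof.
  intros Hz.
  assert (Hz1 : (1 - z)%C <> 0%C).
  { intros H. apply Ceq_minus in H. subst. rewrite Cmod_1 in Hz. lra. }
  assert (ex : ex_series (fun n => Cpow z n)).
  { apply (@ex_series_le C_AbsRing C_CompleteNormedModule _ (fun n => Cmod z ^ n)).
    - intros n. change (Cmod (Cpow z n) <= Cmod z ^ n). now rewrite Cmod_pow.
    - eexists. apply is_series_geom. rewrite Rabs_pos_eq; [exact Hz | apply Cmod_ge_0]. }
  destruct ex as [l Hl]. change C in l.
  assert (shift : is_series (fun n => Cpow z (S n)) (l - 1)%C).
  { apply is_series_incr_1.
    change (is_series (Cpow z) ((l - 1) + 1)%C). now replace ((l - 1) + 1)%C with l by ring. }
  assert (scaled : is_series (fun n => Cpow z (S n)) (z * l)%C).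
  { exact (is_series_scal_l z _ _ Hl). }
  assert (E : (l - 1)%C = (z * l)%C)
    by exact (filterlim_locally_unique _ _ _ shift scaled).
  replace (/ (1 - z))%C with l; [exact Hl|].
  field_simplify_eq; [|exact Hz1].
  replace (- l * z + l)%C with (l - z * l)%C by ring. rewrite <- E. ring.
Qed.

Lemma INR_odd (k : nat) : INR (2 * k + 1) = 2 * INR k + 1.
Proof. rewrite plus_INR, mult_INR. simpl. ring. Qed.

Lemma PSeries_odd_coef (b : nat -> R) (y : R) : Rbar_lt (Rabs y) (CV_radius b) ->
  PSeries (fun k => INR (2 * k + 1) * b k) y = PSeries b y + 2 * y * PSeries (PS_derive b) y.
Proof.
  intros Hy.
  assert (Hb : ex_pseries b y) by now apply CV_radius_inside.
  assert (Hb' : ex_pseries (PS_derive b) y)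
    by (apply CV_radius_inside; now rewrite CV_radius_derive).
  rewrite (PSeries_ext _ (PS_plus b (PS_scal 2 (PS_incr_1 (PS_derive b))))).
  - rewrite PSeries_plus, PSeries_scal, PSeries_incr_1; [ring | exact Hb |].
    apply ex_pseries_scal, ex_pseries_incr_1, Hb'. apply Rmult_comm.
  - intros [|k].
    + change (INR 1 * b 0%nat = b 0%nat + 2 * 0). simpl. ring.
    + change (INR (2 * S k + 1) * b (S k) = b (S k) + 2 * (INR (S k) * b (S k))).
      rewrite INR_odd. ring.
Qed.

Lemma is_derive_odd_PSeries (b : nat -> R) (x : R) : Rbar_lt (x * x) (CV_radius b) ->
  is_derive (fun x => x * PSeries b (x * x)) x (PSeries (fun k => INR (2 * k + 1) * b k) (x * x)).
Proof.
  intros Hx.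
  assert (Hy : Rbar_lt (Rabs (x * x)) (CV_radius b))
    by (rewrite Rabs_pos_eq; [exact Hx | apply Rle_0_sqr]).
  assert (Hsq : is_derive (fun x => x * x) x (2 * x)) by (auto_derive; [easy | ring]).
  assert (Hcomp := is_derive_comp _ _ x _ _ (is_derive_PSeries b (x * x) Hy) Hsq).
  set (P := PSeries b (x * x)). set (P' := PSeries (PS_derive b) (x * x)).
  assert (Hprod : is_derive (fun x => x * PSeries b (x * x)) x (1 * P + x * (2 * x * P')))
    by exact (is_derive_mult (fun x => x) _ x _ _ (is_derive_id x) Hcomp Rmult_comm).
  rewrite (PSeries_odd_coef _ _ Hy). fold P P'.
  replace (P + 2 * (x * x) * P') with (1 * P + x * (2 * x * P')) by ring.
  exact Hprod.
Qed.

Lemma is_derive_eq_increment (F G f : R -> R) (a b : R) : a < b ->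
  (forall x, a <= x <= b -> is_derive F x (f x)) ->
  (forall x, a <= x <= b -> is_derive G x (f x)) ->
  F b - F a = G b - G a.
Proof.
  intros Hab HF HG.
  enough (E : F a - G a = F b - G b) by lra.
  apply (eq_is_derive (fun x => F x - G x)); [|exact Hab].
  intros x Hx.
  assert (H := is_derive_minus _ _ x _ _ (HF x Hx) (HG x Hx)).
  rewrite minus_eq_zero in H. exact H.
Qed.

Definition integrand (u y : R) : R :=
  2 * (2 - u - u * y) / ((u - u * y) ^ 2 + 4 * (1 - u)).

(* The arguments of the logarithms multiply to the denominator of [integrand (t * t) (x * x)]. *)
Definition artanh_primitive (t x : R) : R :=
  (ln ((1 + t * x) ^ 2 + (1 - t * t)) - ln ((1 - t * x) ^ 2 + (1 - t * t))) / (2 * t).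

(* The denominator of [integrand (- (t * t)) (x * x)] is [(2 + t^2 - t^2 x^2)^2 + (2 t x)^2]. *)
Definition arctan_primitive (t x : R) : R :=
  atan (2 * t * x / (2 + t * t - t * t * (x * x))) / t.

Lemma is_derive_artanh_primitive (t x : R) : 0 < t < 1 ->
  is_derive (artanh_primitive t) x (integrand (t * t) (x * x)).
Proof.
  intros Ht. unfold artanh_primitive, integrand.
  assert (HP : 0 < (1 + t * x) ^ 2 + (1 - t * t)) by (pose proof (pow2_ge_0 (1 + t * x)); nra).
  assert (HQ : 0 < (1 - t * x) ^ 2 + (1 - t * t)) by (pose proof (pow2_ge_0 (1 - t * x)); nra).
  auto_derive; [repeat split; lra|].
  replace ((t * t - t * t * (x * x)) ^ 2 + 4 * (1 - t * t))
    with (((1 + t * x) ^ 2 + (1 - t * t)) * ((1 - t * x) ^ 2 + (1 - t * t))) by ring.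
  field. lra.
Qed.

Lemma is_derive_arctan_primitive (t x : R) : 0 < t -> x * x <= 1 ->
  is_derive (arctan_primitive t) x (integrand (- (t * t)) (x * x)).
Proof.
  intros Ht Hx. unfold arctan_primitive, integrand.
  assert (HA : 0 < 2 + t * t - t * t * (x * x)) by nra.
  auto_derive; [lra|].
  replace ((- (t * t) - - (t * t) * (x * x)) ^ 2 + 4 * (1 - - (t * t)))
    with ((2 + t * t - t * t * (x * x)) ^ 2 + (2 * t * x) ^ 2) by ring.
  field. split; [|lra]. nra.
Qed.

Lemma artanh_primitive_0 (t : R) : artanh_primitive t 0 = 0.
Proof.
  unfold artanh_primitive. replace (1 - t * 0) with (1 + t * 0) by ring.
  rewrite Rminus_eq_0. apply Rmult_0_l.
Qed.

Lemma arctan_primitive_0 (t : R) : arctan_primitive t 0 = 0.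
Proof.
  unfold arctan_primitive. rewrite Rmult_0_r. unfold Rdiv. rewrite Rmult_0_l, atan_0.
  apply Rmult_0_l.
Qed.

Lemma artanh_primitive_1 (t : R) : 0 < t < 1 -> artanh_primitive t 1 = arctanh t / t.
Proof.
  intros Ht. unfold artanh_primitive, arctanh.
  replace ((1 + t * 1) ^ 2 + (1 - t * t)) with (2 * (1 + t)) by ring.
  replace ((1 - t * 1) ^ 2 + (1 - t * t)) with (2 * (1 - t)) by ring.
  rewrite ln_div, !ln_mult by lra. field. lra.
Qed.

Lemma arctan_primitive_1 (t : R) : t <> 0 -> arctan_primitive t 1 = atan t / t.
Proof.
  intros Ht. unfold arctan_primitive.
  now replace (2 * t * 1 / (2 + t * t - t * t * (1 * 1))) with t by (field; lra).
Qed.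

Lemma sqrt_between_0_1 (x : R) : 0 < x < 1 -> 0 < sqrt x < 1.
Proof.
  intros Hx. split; [now apply sqrt_lt_R0|].
  rewrite <- sqrt_1. apply sqrt_lt_1; lra.
Qed.

Definition rhs_primitive (u x : R) : R :=
  if Rlt_dec 0 u then artanh_primitive (sqrt u) x else arctan_primitive (sqrt (- u)) x.

Lemma rhs_primitive_0 (u : R) : rhs_primitive u 0 = 0.
Proof.
  unfold rhs_primitive. destruct (Rlt_dec 0 u).
  - apply artanh_primitive_0.
  - apply arctan_primitive_0.
Qed.

Definition w (u : R) : C := Cinv (RtoC 1 - Ci * RtoC (sqrt (1 - u))).

Lemma Re_w_geom (u q : R) : u < 1 ->
  Re (2 * w u / (1 - RtoC q * (w u * w u)))%C = 2 * (2 - u - q) / ((u - q) ^ 2 + 4 * (1 - u)).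
Proof.
  intros Hu. unfold w.
  assert (Hs : 0 < sqrt (1 - u)) by (apply sqrt_lt_R0; lra).
  assert (Hss : sqrt (1 - u) * sqrt (1 - u) = 1 - u) by (apply sqrt_sqrt; lra).
  set (s := sqrt (1 - u)) in *. clearbody s.
  set (a := (RtoC 1 - Ci * RtoC s)%C).
  assert (Ha : a <> 0%C) by (intros H; apply (f_equal Re) in H; simpl in H; lra).
  assert (Hd : (a * a - RtoC q)%C <> 0%C)
    by (intros H; apply (f_equal Im) in H; simpl in H; lra).
  replace (2 * / a / (1 - RtoC q * (/ a * / a)))%C with (2 * a / (a * a - RtoC q))%C
    by (field; auto).
  replace u with (1 - s * s) by lra.
  unfold a, Cdiv, Cinv, Cminus, Cmult, Cplus, Copp, RtoC, Ci, Re; simpl.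
  field. apply Rgt_not_eq.
  pose proof (Rle_0_sqr (1 - s * s - q)). pose proof (Rmult_lt_0_compat s s Hs Hs).
  unfold Rsqr in *. lra.
Qed.

Lemma Cplus_conj_r (z : C) : (z + Cconj z)%C = RtoC (2 * Re z).
Proof. destruct z as [a b]. unfold Cconj, Cplus, RtoC; simpl. f_equal; ring. Qed.

Definition coef (u : R) (k : nat) : R :=
  u ^ k / INR (2 * k + 1) * (2 * Re (Cpow (w u) (2 * k + 1))).

Lemma term_coef (u : R) (k : nat) : term u k = RtoC (coef u k).
Proof.
  unfold term, coef, w. cbv zeta.
  set (a := (RtoC 1 - Ci * RtoC (sqrt (1 - u)))%C).
  assert (Ha : a <> 0%C) by (intros H; apply (f_equal Re) in H; simpl in H; lra).
  assert (Hconj : (RtoC 1 + Ci * RtoC (sqrt (1 - u)))%C = Cconj a)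
    by (unfold a, Cconj, Cminus, Cplus, Cmult, Copp, RtoC, Ci; simpl; f_equal; ring).
  assert (Ha' : Cconj a <> 0%C)
    by (intros H; apply (f_equal Re) in H; simpl in H; lra).
  rewrite Hconj, <- !Cpow_inv, <- Cinv_conj, <- Cpow_conj, Cplus_conj_r by assumption.
  now rewrite <- RtoC_mult.
Qed.

Lemma Cmod_w_sqr (u : R) : u < 1 -> Cmod (w u) ^ 2 = / (2 - u).
Proof.
  intros Hu. unfold w.
  assert (Hss : sqrt (1 - u) * sqrt (1 - u) = 1 - u) by (apply sqrt_sqrt; lra).
  rewrite Cmod_inv, pow_inv, Cmod2_alt.
  - simpl. f_equal. nra.
  - intros H; apply (f_equal Re) in H; simpl in H; lra.
Qed.

Lemma coef_odd_term (u y : R) (k : nat) :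
  INR (2 * k + 1) * coef u k * y ^ k = Re (2 * w u * (RtoC (u * y) * (w u * w u)) ^ k)%C.
Proof.
  unfold coef. rewrite Cpow_add_r, Cpow_mult_r, Cpow_1_r, Cpow_mult_l, <- RtoC_pow.
  replace (w u * w u)%C with (w u ^ 2)%C by ring.
  set (p := ((w u ^ 2) ^ k)%C).
  replace (2 * w u * (RtoC ((u * y) ^ k) * p))%C with (RtoC (2 * (u * y) ^ k) * (p * w u))%C
    by (rewrite RtoC_mult; ring).
  rewrite re_scal_l, Rpow_mult_distr. field.
  rewrite INR_odd. pose proof (pos_INR k). lra.
Qed.

Lemma is_series_coef_odd (u y : R) : u < 1 -> Rabs (u * y) < 2 - u ->
  is_series (fun k => INR (2 * k + 1) * coef u k * y ^ k) (integrand u y).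
Proof.
  intros Hu Huy.
  set (z := (RtoC (u * y) * (w u * w u))%C).
  assert (Hz : Cmod z < 1).
  { unfold z. rewrite Cmod_mult, Cmod_mult, Cmod_R.
    replace (Cmod (w u) * Cmod (w u)) with (/ (2 - u))
      by (rewrite <- Cmod_w_sqr; [ring | exact Hu]).
    apply (Rmult_lt_reg_r (2 - u)); [lra|].
    rewrite Rmult_assoc, Rinv_l, Rmult_1_r, Rmult_1_l; lra. }
  assert (Hgeom := is_series_scal_l (2 * w u)%C _ _ (is_series_C_geom z Hz)).
  assert (HRe := is_series_additive Re _ _ re_plus (filterlim_Re _) Hgeom).
  unfold integrand. rewrite <- Re_w_geom by exact Hu.
  eapply is_series_ext; [|exact HRe].
  intros k. symmetry. apply coef_odd_term.
Qed.

Lemma Rabs_coef_le (u : R) (k : nat) : u < 1 ->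
  Rabs (coef u k) <= 2 * Cmod (w u) * (Rabs u / (2 - u)) ^ k.
Proof.
  intros Hu. unfold coef.
  assert (HI : 1 <= INR (2 * k + 1)) by (rewrite INR_odd; pose proof (pos_INR k); lra).
  assert (Hw : Cmod (w u) ^ (2 * k + 1) = Cmod (w u) * (/ (2 - u)) ^ k)
    by (rewrite pow_add, pow_mult, Cmod_w_sqr by exact Hu; ring).
  apply Rle_trans with (Rabs u ^ k * (2 * Cmod (w u) ^ (2 * k + 1))).
  - rewrite Rabs_mult. apply Rmult_le_compat; try apply Rabs_pos.
    + unfold Rdiv. rewrite Rabs_mult, <- RPow_abs, Rabs_inv, (Rabs_pos_eq (INR _)) by lra.
      rewrite <- (Rmult_1_r (Rabs u ^ k)) at 2.
      apply Rmult_le_compat_l; [apply pow_le, Rabs_pos|].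
      rewrite <- Rinv_1. apply Rinv_le_contravar; lra.
    + rewrite Rabs_mult, Rabs_pos_eq, <- Cmod_pow by lra.
      apply Rmult_le_compat_l; [lra | apply re_le_Cmod].
  - right. rewrite Hw. unfold Rdiv. rewrite Rpow_mult_distr. ring.
Qed.

Lemma CV_radius_coef (u : R) : u < 1 -> u <> 0 ->
  Rbar_le ((2 - u) / Rabs u) (CV_radius (coef u)).
Proof.
  intros Hu Hu0.
  assert (Habs : 0 < Rabs u) by now apply Rabs_pos_lt.
  set (r := (2 - u) / Rabs u).
  assert (Hr : 0 < r) by (apply Rdiv_lt_0_compat; lra).
  apply (proj1 (CV_radius_bounded (coef u))). exists (2 * Cmod (w u)). intros k.
  rewrite Rabs_mult, <- RPow_abs, (Rabs_pos_eq r) by lra.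
  apply Rle_trans with (2 * Cmod (w u) * (Rabs u / (2 - u) * r) ^ k).
  - rewrite Rpow_mult_distr, <- Rmult_assoc.
    apply Rmult_le_compat_r; [apply pow_le; lra | now apply Rabs_coef_le].
  - replace (Rabs u / (2 - u) * r) with 1 by (unfold r; field; lra).
    rewrite pow1. lra.
Qed.

Section Evaluation.

Variable u : R.
Hypothesis hu1 : u < 1.
Hypothesis hu0 : u <> 0.

Lemma CV_radius_coef_gt_1 : Rbar_lt 1 (CV_radius (coef u)).
Proof.
  eapply Rbar_lt_le_trans; [|exact (CV_radius_coef u hu1 hu0)].
  assert (Habs : 0 < Rabs u) by now apply Rabs_pos_lt.
  simpl. apply (Rmult_lt_reg_r (Rabs u)); [exact Habs|].
  unfold Rdiv. rewrite Rmult_assoc, Rinv_l, Rmult_1_l, Rmult_1_r by lra.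
  destruct (Rcase_abs u); [rewrite Rabs_left | rewrite Rabs_right]; lra.
Qed.

Lemma is_derive_coef_PSeries (x : R) : x * x <= 1 ->
  is_derive (fun x => x * PSeries (coef u) (x * x)) x (integrand u (x * x)).
Proof.
  intros Hx.
  assert (Hux : Rabs (u * (x * x)) < 2 - u).
  { rewrite Rabs_mult, (Rabs_pos_eq (x * x)) by apply Rle_0_sqr.
    destruct (Rcase_abs u); [rewrite Rabs_left | rewrite Rabs_right]; nra. }
  assert (Hsum := is_series_coef_odd u _ hu1 Hux).
  rewrite <- (is_pseries_unique _ _ _ (proj2 (is_pseries_R _ _ _) Hsum)).
  apply is_derive_odd_PSeries.
  exact (Rbar_le_lt_trans (x * x) 1 _ Hx CV_radius_coef_gt_1).
Qed.

Lemma is_series_coef : is_series (coef u) (PSeries (coef u) 1).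
Proof.
  assert (H1 : Rbar_lt (Rabs 1) (CV_radius (coef u)))
    by (rewrite Rabs_R1; exact CV_radius_coef_gt_1).
  apply (is_series_ext (fun k => coef u k * 1 ^ k)); [intros k; now rewrite pow1, Rmult_1_r|].
  apply is_pseries_R, PSeries_correct, CV_radius_inside, H1.
Qed.

Lemma rhs_primitive_1 : rhs_primitive u 1 = rhs u.
Proof.
  unfold rhs_primitive, rhs. destruct (Rlt_dec 0 u) as [Hpos | Hneg].
  - apply artanh_primitive_1, sqrt_between_0_1. lra.
  - apply arctan_primitive_1, Rgt_not_eq, sqrt_lt_R0. lra.
Qed.

Lemma is_derive_rhs_primitive (x : R) : x * x <= 1 ->
  is_derive (rhs_primitive u) x (integrand u (x * x)).
Proof.
  intros Hx. unfold rhs_primitive. destruct (Rlt_dec 0 u) as [Hpos | Hneg].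
  - assert (Ht : 0 < sqrt u < 1) by (apply sqrt_between_0_1; lra).
    assert (H := is_derive_artanh_primitive _ x Ht).
    rewrite sqrt_sqrt in H by lra. exact H.
  - assert (Ht : 0 < sqrt (- u)) by (apply sqrt_lt_R0; lra).
    assert (H := is_derive_arctan_primitive _ x Ht Hx).
    rewrite sqrt_sqrt, Ropp_involutive in H by lra. exact H.
Qed.

Lemma PSeries_coef_1 : PSeries (coef u) 1 = rhs u.
Proof.
  assert (E : 1 * PSeries (coef u) (1 * 1) - 0 * PSeries (coef u) (0 * 0)
              = rhs_primitive u 1 - rhs_primitive u 0).
  { apply (is_derive_eq_increment (fun x => x * PSeries (coef u) (x * x)) _
             (fun x => integrand u (x * x))); [lra | |]; intros x Hx.
    - apply is_derive_coef_PSeries. nra.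
    - apply is_derive_rhs_primitive. nra. }
  rewrite rhs_primitive_0, rhs_primitive_1, !Rmult_1_l in E. lra.
Qed.

End Evaluation.

Theorem lemma5p1 (u : R) (hu1 : u < 1) (hu0 : u <> 0) :
  is_series (term u) (RtoC (rhs u)).
Proof.
  apply (is_series_ext (fun k => RtoC (coef u k))); [intros k; now rewrite term_coef|].
  rewrite <- (PSeries_coef_1 u hu1 hu0).
  apply (is_series_additive RtoC);
    [exact RtoC_plus | apply filterlim_RtoC | exact (is_series_coef u hu1 hu0)].
Qed.
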